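(* In the setting described in the context, $\mathcal{D}_{\boldsymbol{x}}=\mathcal{D}_{\boldsymbol{x}'}$ for every $\boldsymbol{x},\boldsymbol{x}'\in\mathbb{Z}_+^2$.
   Context: Let $S_0=\{1,\dots,s_0\}$ be finite and $\{\boldsymbol{Y}_n\}$ a Markov chain on $\mathbb{S}=\mathbb{Z}^2\times S_0$ with $\mathbb{P}(\boldsymbol{Y}_{n+1}=(x_1+k,x_2+l,j')\mid\boldsymbol{Y}_n=(x_1,x_2,j))=[A_{k,l}]_{j,j'}$ for $k,l\in\{-1,0,1\}$ (no other transitions), $A_{k,l}$ nonnegative $s_0\times s_0$ with $\sum A_{k,l}$ stochastic. Let $\mathbb{S}_+=\mathbb{Z}_+^2\times S_0$, $P_+$ the restriction of the transition matrix to $\mathbb{S}_+$, $\tau=\inf\{n\ge0:\boldsymbol{Y}_n\notin\mathbb{S}_+\}$, $\tilde q_{\boldsymbol{y},\boldsymbol{y}'}=\mathbb{E}\big(\sum_{n=0}^{\tau-1}1(\boldsymbol{Y}_n=\boldsymbol{y}')\mid\boldsymbol{Y}_0=\boldsymbol{y}\big)$. With $\boldsymbol\pi_{*,*}$ the stationary distribution of $\sum A_{k,l}$, $a_1=\boldsymbol{\pi}_{*,*}\sum_l(A_{1,l}-A_{-1,l})\mathbf{1}$, $a_2=\boldsymbol{\pi}_{*,*}\sum_k(A_{k,1}-A_{k,-1})\mathbf{1}$. Standing assumptions: $\{\boldsymbol Y_n\}$ irreducible and aperiodic; $a_1<0$ or $a_2<0$; $P_+$ irreducible. For $\boldsymbol{x}\in\mathbb{Z}_+^2$,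 $\Phi_{\boldsymbol{x}}(\theta_1,\theta_2)$ is the $s_0\times s_0$ matrix with $(j,j')$ entry $\sum_{k_1,k_2\ge0}e^{k_1\theta_1+k_2\theta_2}\tilde q_{(\boldsymbol{x},j),(k_1,k_2,j')}$, and $\mathcal{D}_{\boldsymbol{x}}$ is the interior of $\{(\theta_1,\theta_2)\in\mathbb{R}^2:\Phi_{\boldsymbol{x}}(\theta_1,\theta_2)<\infty\text{ elementwise}\}$. *)

From HB Require Import structures.
From mathcomp Require Import all_boot all_order all_algebra.
From mathcomp Require Import all_classical all_reals all_analysis.

Set Implicit Arguments.
Unset Strict Implicit.
Unset Printing Implicit Defensive.

Import Order.TTheory GRing.Theory Num.Theory.
Import numFieldNormedType.Exports.
Local Open Scope ring_scope.

Section MAP.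
Variables (R : realType) (s0 : nat).

(* A k l : the s0 x s0 block [A_{k,l}]; only k,l in {-1,0,1} are relevant *)
Definition steps : seq int := [:: -1; 0; 1]%R.

Definition state := (int * int * 'I_s0)%type.

Definition in_Splus (y : state) : bool := (0 <= y.1.1) && (0 <= y.1.2).

Definition trans (A : int -> int -> 'M[R]_s0) (y y' : state) : R :=
  A (y'.1.1 - y.1.1) (y'.1.2 - y.1.2) y.2 y'.2.

Fixpoint transn (A : int -> int -> 'M[R]_s0) (n : nat) (y y' : state) : R :=
  match n with
  | 0%N => (y == y')%:R
  | n.+1 => \sum_(k <- steps) \sum_(l <- steps) \sum_(j : 'I_s0)
             A k l y.2 j * transn A n (y.1.1 + k, y.1.2 + l, j) y'
  end.

(* P(Y_n = y', n < tau | Y_0 = y), i.e. the n-step probabilities of P_+ *)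
Fixpoint transn_plus (A : int -> int -> 'M[R]_s0) (n : nat) (y y' : state) : R :=
  match n with
  | 0%N => ((y == y') && in_Splus y)%:R
  | n.+1 => (in_Splus y)%:R *
            \sum_(k <- steps) \sum_(l <- steps) \sum_(j : 'I_s0)
             A k l y.2 j * transn_plus A n (y.1.1 + k, y.1.2 + l, j) y'
  end.

(* \tilde q_{y,y'} = E( sum_{n < tau} 1(Y_n = y') | Y_0 = y ) *)
Definition qtilde (A : int -> int -> 'M[R]_s0) (y y' : state) : \bar R :=
  (\esum_(n in [set: nat]) (transn_plus A n y y')%:E)%E.

Definition Phi (A : int -> int -> 'M[R]_s0) (x : nat * nat) (theta : R * R)
    (j j' : 'I_s0) : \bar R :=
  (\esum_(k in [set: nat * nat])
      (expR (k.1%:R * theta.1 + k.2%:R * theta.2))%:E *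
      qtilde A ((x.1%:Z, x.2%:Z, j)) ((k.1%:Z, k.2%:Z, j')))%E.

Definition Dom (A : int -> int -> 'M[R]_s0) (x : nat * nat) : set (R * R) :=
  @interior (R * R)%type [set theta | forall j j' : 'I_s0, (Phi A x theta j j' < +oo)%E].

Definition MAP_kernel (A : int -> int -> 'M[R]_s0) : Prop :=
  (forall k l, ~~ ((k \in steps) && (l \in steps)) -> A k l = 0) /\
  (forall k l i j, 0 <= A k l i j) /\
  (forall i, \sum_(k <- steps) \sum_(l <- steps) \sum_(j : 'I_s0) A k l i j = 1).

Definition Asum (A : int -> int -> 'M[R]_s0) : 'M[R]_s0 :=
  \sum_(k <- steps) \sum_(l <- steps) A k l.

Definition stationary (M : 'M[R]_s0) (pi : 'rV[R]_s0) : Prop :=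
  (forall j, 0 <= pi 0 j) /\ \sum_j pi 0 j = 1 /\ pi *m M = pi.

Definition drift (pi : 'rV[R]_s0) (M : 'M[R]_s0) : R :=
  \sum_i \sum_j pi 0 i * M i j.

Definition a1 (A : int -> int -> 'M[R]_s0) (pi : 'rV[R]_s0) : R :=
  drift pi (\sum_(l <- steps) (A 1 l - A (-1) l)).

Definition a2 (A : int -> int -> 'M[R]_s0) (pi : 'rV[R]_s0) : R :=
  drift pi (\sum_(k <- steps) (A k 1 - A k (-1))).

Definition irreducible (A : int -> int -> 'M[R]_s0) : Prop :=
  forall y y' : state, exists n, 0 < transn A n y y'.

Definition aperiodic (A : int -> int -> 'M[R]_s0) : Prop :=
  forall y : state, forall d : nat,
    (forall n : nat, (0 < n)%N -> 0 < transn A n y y -> (d %| n)%N) -> d = 1%N.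

Definition irreducible_plus (A : int -> int -> 'M[R]_s0) : Prop :=
  forall y y' : state, in_Splus y -> in_Splus y' ->
    exists n, 0 < transn_plus A n y y'.

End MAP.

From mathcomp Require Import all_boot all_order all_algebra.
From mathcomp Require Import all_classical all_reals all_analysis.
Import Order.TTheory GRing.Theory Num.Theory.
Import numFieldNormedType.Exports.
Local Open Scope ring_scope.

(* Running the chain killed outside S_+ for n steps from y to z and then
   continuing from z only loses paths, so P_+^n(y,z) q~(z,w) <= q~(y,w).
   Summing against the exponential weights gives, for every phase i,
   P_+^n((x,i),(x',i)) Phi_x'(theta) <= Phi_x(theta) in row i, and irreducibility
   of P_+ makes the constant positive for some n; hence finiteness of Phi_x
   implies finiteness of Phi_x', and by symmetry the two domains coincide. *)

Section ExtendedSums.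
Local Open Scope ereal_scope.
Local Open Scope classical_set_scope.
Variables (R : realType) (T : choiceType).
Implicit Types (I J : set T) (a : T -> \bar R).

Lemma le_esum_subset I J a : I `<=` J -> \esum_(i in I) a i <= \esum_(i in J) a i.
Proof.
move=> IJ; apply: ge_ereal_sup => _ [X [finX XI] <-].
by apply: ereal_sup_ubound; exists X => //; split => //; apply: subset_trans IJ.
Qed.

Lemma esumZl I a (r : R) : (0 <= r)%R -> (forall i, 0 <= a i) ->
  \esum_(i in I) (r%:E * a i) = r%:E * \esum_(i in I) a i.
Proof.
rewrite le0r => /orP[/eqP->|r_gt0] a_ge0.
  by rewrite mul0e esum1 // => i _; rewrite mul0e.
rewrite /esum -ereal_sup_pZl //; congr ereal_sup.
apply/seteqP; split => _ [X IX <-].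
  by exists (\sum_(i \in X) a i); [exists X | rewrite ge0_mule_fsumr].
by case: IX => Y IY <-; exists Y => //; rewrite ge0_mule_fsumr.
Qed.

Lemma mule_le_lty (c : R) (u v : \bar R) :
  (0 < c)%R -> c%:E * u <= v -> v < +oo -> u < +oo.
Proof.
move=> c_gt0; case: u => [r _ _ | | //]; first exact: ltry.
by rewrite muleC gt0_mulye ?lte_fin // => /le_lt_trans h /h; rewrite ltxx.
Qed.

End ExtendedSums.

Section KilledChain.
Variables (R : realType) (s0 : nat) (A : int -> int -> 'M[R]_s0).
Hypothesis A_ge0 : forall k l i j, 0 <= A k l i j.

Lemma transn_plus_ge0 n y w : 0 <= transn_plus A n y w.
Proof.
elim: n y => [|n IHn] y /=; first by rewrite ler0n.
rewrite mulr_ge0 ?ler0n //.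
apply: sumr_ge0 => k _; apply: sumr_ge0 => l _; apply: sumr_ge0 => j _.
exact: mulr_ge0.
Qed.

Lemma mul_transn_plus_le m n y z w :
  transn_plus A m y z * transn_plus A n z w <= transn_plus A (m + n) y w.
Proof.
elim: m y => [|m IHm] y /=.
  have [<-|_] := eqVneq y z; last by rewrite mul0r transn_plus_ge0.
  by case: (in_Splus y); rewrite ?mul1r ?mul0r ?transn_plus_ge0.
rewrite -mulrA ler_wpM2l ?ler0n //.
rewrite mulr_suml; apply: ler_sum => k _.
rewrite mulr_suml; apply: ler_sum => l _.
rewrite mulr_suml; apply: ler_sum => j _.
by rewrite -mulrA ler_wpM2l ?IHm.
Qed.

Local Open Scope ereal_scope.

Lemma qtilde_ge0 y w : 0 <= qtilde A y w.
Proof. by apply: esum_ge0 => n _; rewrite lee_fin transn_plus_ge0. Qed.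

Lemma mul_qtilde_le n y z w :
  (transn_plus A n y z)%:E * qtilde A z w <= qtilde A y w.
Proof.
rewrite /qtilde -esumZl ?transn_plus_ge0 //; last first.
  by move=> m; rewrite lee_fin transn_plus_ge0.
apply: (@le_trans _ _ (\esum_(m in [set: nat]) (transn_plus A (n + m) y w)%:E)).
  by apply: le_esum => m _; rewrite -EFinM lee_fin mul_transn_plus_le.
rewrite -(esum_image _ (addn n) (fun m => (transn_plus A m y w)%:E)).
  exact: le_esum_subset.
by move=> a b _ _ /addnI.
Qed.

Lemma mul_Phi_le n (x x' : nat * nat) theta (i i' j : 'I_s0) :
  (transn_plus A n (x.1%:Z, x.2%:Z, i) (x'.1%:Z, x'.2%:Z, i'))%:E
    * Phi A x' theta i' j <= Phi A x theta i j.
Proof.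
rewrite /Phi -esumZl ?transn_plus_ge0 //; last first.
  by move=> k; rewrite mule_ge0 ?qtilde_ge0 // lee_fin expR_ge0.
apply: le_esum => k _; rewrite muleCA lee_wpmul2l ?lee_fin ?expR_ge0 //.
exact: mul_qtilde_le.
Qed.

Lemma Phi_lty_transfer (x x' : nat * nat) theta :
  irreducible_plus A ->
  (forall j j', Phi A x theta j j' < +oo) ->
  forall j j', Phi A x' theta j j' < +oo.
Proof.
move=> irrA Phi_x_lty i j.
have [n Pn_gt0] := irrA (x.1%:Z, x.2%:Z, i) (x'.1%:Z, x'.2%:Z, i) isT isT.
exact: mule_le_lty Pn_gt0 (mul_Phi_le _ _ _ _ _ _ _) (Phi_x_lty i j).
Qed.

End KilledChain.

Theorem proposition4p3 (R : realType) (s0 : nat)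
    (A : int -> int -> 'M[R]_s0) (pi : 'rV[R]_s0) :
  MAP_kernel A ->
  irreducible A -> aperiodic A ->
  stationary (Asum A) pi ->
  (a1 A pi < 0 \/ a2 A pi < 0) ->
  irreducible_plus A ->
  forall x x' : nat * nat, Dom A x = Dom A x'.
Proof.
move=> [_ [A_ge0 _]] _ _ _ _ irrA x x'; rewrite /Dom; congr interior.
by apply/seteqP; split => theta; apply: Phi_lty_transfer.
Qed.
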